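(* For $0\le k\le n$, \[ q^{k^2}[2]_q^{k}\,S_B[n,k]=\sum_{\pi\in B_{\subseteq}([n],k)}q^{m(\pi)}. \]
   Context: $[k]_q=1+\dots+q^{k-1}$, $[0]_q=0$. $S_B[n,k]$ is defined by $S_B[0,k]=\delta_{0k}$ and $S_B[n,k]=S_B[n-1,k-1]+[2k+1]_qS_B[n-1,k]$ for $n\ge1$ (with $S_B[n-1,-1]=0$). For $S\subset\mathbb{Z}\setminus\{0\}$ and $\overline{S}=\{-i:i\in S\}$, a standard signed partition (SSP) of $S$ with $k$ blocks is a sequence $(S_1,\dots,S_k)$ of disjoint nonempty subsets of $S\cup\overline{S}$ such that $\{S_1,\dots,S_k,\overline{S_1},\dots,\overline{S_k}\}$ is a partition of $S\cup\overline{S}$ and $\min|S_1|\le\dots\le\min|S_k|$, where $|S_i|=\{|j|:j\in S_i\}$. A PSSP of $S$ is an SSP of a (possibly empty) subset of $S$; $B_{\subseteq}(S,k)$ is the set of PSSPs of $S$ with $k$ blocks. For $\pi=(S_1,\dots,S_k)$, $\mathrm{pos}(\pi)=\#\{x\in\bigcup_iS_i:x>0\}$ and $m(\pi)=2\sum_{i=1}^k i\cdot\#S_i-\mathrm{pos}(\pi)$. *)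

From mathcomp Require Import all_boot all_order all_algebra.
Set Implicit Arguments. Unset Strict Implicit. Unset Printing Implicit Defensive.
Import GRing.Theory.
Local Open Scope ring_scope.

Definition qint (R : comNzRingType) (q : R) (k : nat) : R := \sum_(i < k) q ^+ i.

Fixpoint SB (R : comNzRingType) (q : R) (n k : nat) : R :=
  match n with
  | 0 => (k == 0%N)%:R
  | n'.+1 => (if k is k'.+1 then SB q n' k' else 0) + qint q (2 * k + 1) * SB q n' k
  end.

(* Signed elements of [n] \cup \bar{[n]}: (i, true) stands for i+1 and
   (i, false) for -(i+1), for i : 'I_n. *)
Definition signed (n : nat) := ('I_n * bool)%type.

Definition sbar n (x : signed n) : signed n := (x.1, ~~ x.2).
Definition sabs n (x : signed n) : nat := (x.1).+1.

Definition setbar n (A : {set signed n}) : {set signed n} := (@sbar n) @: A.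

(* T \cup \bar T for T a subset of [n] *)
Definition symm n (T : {set 'I_n}) : {set signed n} := [set x | x.1 \in T].

(* min |A| (meaningful for A nonempty) *)
Definition minabs n (A : {set signed n}) : nat := \big[minn/n.+1]_(x in A) sabs x.

(* The 2k blocks S_1..S_k, \bar S_1..\bar S_k, indexed by 'I_k * bool
   ((i,true) = S_{i+1}, (i,false) = \bar S_{i+1}). *)
Definition blk n k (pi : {ffun 'I_k -> {set signed n}}) (j : 'I_k * bool)
  : {set signed n} := if j.2 then pi j.1 else setbar (pi j.1).

Definition is_SSP n k (T : {set 'I_n}) (pi : {ffun 'I_k -> {set signed n}}) : bool :=
  [&& [forall i, pi i != set0],
      [forall j1, forall j2, (j1 != j2) ==> [disjoint blk pi j1 & blk pi j2]],
      \bigcup_(j : 'I_k * bool) blk pi j == symm T &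
      [forall i : 'I_k, forall j : 'I_k, (i <= j)%N ==> (minabs (pi i) <= minabs (pi j))%N]].

Definition is_PSSP n k (pi : {ffun 'I_k -> {set signed n}}) : bool :=
  [exists T : {set 'I_n}, is_SSP T pi].

Definition pos n k (pi : {ffun 'I_k -> {set signed n}}) : nat :=
  #|[set x in \bigcup_(i : 'I_k) pi i | x.2]|.

(* m(pi) = 2 * sum_i i * #S_i - pos(pi)  (blocks numbered from 1; this is >= 0) *)
Definition mstat n k (pi : {ffun 'I_k -> {set signed n}}) : nat :=
  (2 * (\sum_(i : 'I_k) i.+1 * #|pi i|) - pos pi)%N.

From mathcomp Require Import all_boot all_order all_algebra.
From mathcomp Require Import zify ring.
Set Implicit Arguments. Unset Strict Implicit. Unset Printing Implicit Defensive.
Import Order.TTheory GRing.Theory.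

(* Encode a partial signed partition pi = (S_1, ..., S_k) of [n] by the word w of length n
   with w_a = 0 when a is outside its support, w_a = 2i - 1 when +a lies in S_i and w_a = 2i
   when -a lies in S_i. Then m(pi) is the sum of the letters of w, and the words that arise
   are exactly the standard ones: the letters are at most 2k, every block is used, and the
   blocks first occur in increasing order (this is min|S_1| <= ... <= min|S_k|). Deleting the
   last letter of a standard word with k blocks leaves a standard word with k blocks if that
   letter is one of 0, ..., 2k, and one with k - 1 blocks if it is 2k - 1 or 2k and opens
   block k. So the generating polynomial W(n, k) of standard words satisfies
   W(n, k) = [2k+1]_q W(n-1, k) + q^(2k-1) [2]_q W(n-1, k-1), the recurrence of
   q^(k^2) [2]_q^k S_B[n, k], since k^2 - (k-1)^2 = 2k - 1. *)

(* Blocks are numbered from 0: S_(i+1) contributes the letters [letter i true] and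
   [letter i false]. *)
Definition letter (i : nat) (b : bool) : nat := if b then (2 * i).+1 else (2 * i).+2.

Definition in_block (j c : nat) : bool := 2 * j < c <= (2 * j).+2.

Lemma letter_gt0 i b : 0 < letter i b.
Proof. by case: b. Qed.

Lemma letter_inj i b i' b' : letter i b = letter i' b' -> i = i' /\ b = b'.
Proof. by case: b; case: b'; rewrite /letter => /= e; split => //; lia. Qed.

Lemma letter_leq_double k i b : i < k -> letter i b <= 2 * k.
Proof. by case: b; rewrite /letter; lia. Qed.

Lemma double_ltn_letter j i b : ((2 * j).+2 < letter i b) = (j < i).
Proof. by case: b; rewrite /letter; apply/idP/idP; lia. Qed.

Lemma in_block_letter j i b : in_block j (letter i b) = (i == j).
Proof. by case: b; rewrite /in_block /letter; apply/idP/eqP; lia. Qed.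

Lemma in_blockE j c : in_block j c -> c = letter j (odd c).
Proof. by rewrite /in_block /letter; have := modn2 c; case: (odd c) => /=; lia. Qed.

Lemma letter_cover k c : 0 < c -> c <= 2 * k -> exists (i : 'I_k) b, c = letter i b.
Proof.
move=> c_gt0 c_le; have i_lt : c.-1 %/ 2 < k by lia.
by exists (Ordinal i_lt), (odd c); apply: in_blockE; rewrite /in_block /=; lia.
Qed.

Lemma has_in_block_takeP j s a :
  reflect (exists2 b, b < a & in_block j (nth 0 s b)) (has (in_block j) (take a s)).
Proof.
apply: (iffP (has_nthP 0)) => [[b] | [b b_lt]].
  by rewrite size_take => b_lt; rewrite nth_take; [exists b|]; case: ifP b_lt; lia.
case: (ltnP b (size s)) => [b_s | b_s]; last by rewrite nth_default.
by exists b; [rewrite size_take; case: ifP; lia | rewrite nth_take].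
Qed.

(* [(2 * j).+2 < c] says that the letter c lies in a block after block j. *)
Definition blocks_ordered (s : seq nat) : Prop :=
  forall a j, (2 * j).+2 < nth 0 s a -> has (in_block j) (take a s).

Definition standard_word (k : nat) (s : seq nat) : Prop :=
  [/\ all (fun c => c <= 2 * k) s, forall j, j < k -> has (in_block j) s & blocks_ordered s].

Lemma blocks_ordered_rcons s c :
  blocks_ordered (rcons s c) <->
  blocks_ordered s /\ (forall j, (2 * j).+2 < c -> has (in_block j) s).
Proof.
split=> [ord | [ord ord_c] a j].
  split=> [a j | j]; last first.
    by have := ord (size s) j; rewrite nth_rcons ltnn eqxx -cats1 take_size_cat.
  case: (ltnP a (size s)) => [a_s | a_s]; last by rewrite nth_default.
  by have := ord a j; rewrite nth_rcons a_s -cats1 takel_cat // ltnW.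
rewrite nth_rcons -cats1; case: (ltngtP a (size s)) => [a_s | // | ->].
  by rewrite takel_cat; [apply: ord | apply: ltnW].
by rewrite take_size_cat //; apply: ord_c.
Qed.

Lemma standard_word_nil k : standard_word k [::] <-> k = 0.
Proof.
split=> [[_ cover _] | ->]; first by case: k cover => // k /(_ 0 isT).
by split=> // a j; rewrite nth_nil.
Qed.

Lemma standard_word_uniq k k' s : standard_word k s -> standard_word k' s -> k = k'.
Proof.
wlog lt_kk' : k k' / k < k'.
  by move=> wlog sk sk'; case: (ltngtP k k') => [/wlog | /wlog | //]; [apply | move/(_ sk' sk)].
move=> [/allP small _ _] [_ /(_ k lt_kk') /hasP [c /small]]; rewrite /in_block; lia.
Qed.

Lemma standard_word_rcons k s c :
  standard_word k (rcons s c) <->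
  standard_word k s /\ c <= 2 * k \/
  exists2 k', k = k'.+1 & standard_word k' s /\ in_block k' c.
Proof.
rewrite /standard_word all_rcons; split.
- case=> /andP[c_le small] cover /blocks_ordered_rcons [ord ord_c].
  case: k c_le small cover => [|k'] c_le small cover; first by left.
  have [old | new] := boolP (has (in_block k') s).
    left; split=> //; split=> // j; rewrite ltnS leq_eqVlt => /orP[/eqP -> // | lt_jk'].
    have [a _ a_k'] := has_nthP 0 old.
    have /ord : (2 * j).+2 < nth 0 s a by move: a_k'; rewrite /in_block; lia.
    by rewrite -{2}(cat_take_drop a s) has_cat => ->.
  have c_k' : in_block k' c.
    by have := cover k' (ltnSn _); rewrite has_rcons (negbTE new) orbF.
  right; exists k' => //; split=> //; split=> //.
    apply/allP => c' c's; have := allP small c' c's.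
    have : ~~ in_block k' c' by apply: contra new => c'_k'; apply/hasP; exists c'.
    by rewrite /in_block; lia.
  by move=> j lt_jk'; apply: ord_c; move: c_k'; rewrite /in_block; lia.
- case=> [[[small cover ord] c_le] | [k' -> [[small cover ord] c_k']]].
    split; [by rewrite c_le | by move=> j /cover; rewrite has_rcons orbC => -> |].
    by apply/blocks_ordered_rcons; split=> // j lt_jc; apply: cover; lia.
  have /andP [gt_c le_c] := c_k'; split.
  + have c_le : c <= 2 * k'.+1 by lia.
    by rewrite c_le; apply: sub_all small => c' /=; lia.
  + move=> j; rewrite ltnS leq_eqVlt has_rcons => /orP[/eqP -> | /cover ->].
      by rewrite c_k'.
    by rewrite orbT.
  + by apply/blocks_ordered_rcons; split=> // j lt_jc; apply: cover; lia.
Qed.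

Fixpoint standard_words (n k : nat) : seq (seq nat) :=
  if n is n'.+1 then
    [seq rcons s c | s <- standard_words n' k, c <- iota 0 (2 * k).+1] ++
    if k is k'.+1 then [seq rcons s c | s <- standard_words n' k', c <- iota (2 * k').+1 2]
    else [::]
  else if k is 0 then [:: [::]] else [::].

Lemma mem_allpairs_rcons (T : eqType) (S : seq (seq T)) (C : seq T) s c :
  (rcons s c \in [seq rcons s c | s <- S, c <- C]) = (s \in S) && (c \in C).
Proof.
apply/allpairsP/andP => [[[s' c'] [Ss' Cc' /rcons_inj [-> ->]]] // | [Ss Cc]].
by exists (s, c).
Qed.

Lemma mem_standard_words n k s :
  s \in standard_words n k <-> size s = n /\ standard_word k s.
Proof.
elim: n k s => [|n IH] k s.
  case: k => [|k] /=; last by split=> // -[/size0nil -> /standard_word_nil].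
  rewrite inE; split=> [/eqP -> | [/size0nil -> _]] //.
  by split=> //; apply/standard_word_nil.
case/lastP: s => [|s c].
  split=> [|[] //]; cbn [standard_words]; rewrite mem_cat => /orP [].
    by case/allpairsP => -[s' c'] [_ _]; case: s'.
  by case: k => // k /allpairsP [[s' c'] [_ _]]; case: s'.
cbn [standard_words]; rewrite mem_cat mem_allpairs_rcons standard_word_rcons size_rcons.
split=> [/orP [] | [[s_n] [[s_k c_le] | [k' -> [s_k' c_k']]]]].
- case/andP => /IH [<- s_k]; rewrite mem_iota => c_le.
  by split=> //; left; split=> //; lia.
- case: k => // k; rewrite mem_allpairs_rcons mem_iota => /andP [/IH [<- s_k] c_k].
  by split=> //; right; exists k => //; split=> //; rewrite /in_block; lia.
- by apply/orP; left; rewrite mem_iota; apply/andP; split; [exact/IH | lia].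
- apply/orP; right; rewrite mem_allpairs_rcons mem_iota; apply/andP; split; first exact/IH.
  by move: c_k'; rewrite /in_block; lia.
Qed.

Lemma uniq_allpairs_rcons (T : eqType) (S : seq (seq T)) (C : seq T) :
  uniq S -> uniq C -> uniq [seq rcons s c | s <- S, c <- C].
Proof.
by move=> uS uC; apply: allpairs_uniq => // -[s c] [s' c'] _ _ /= /rcons_inj [-> ->].
Qed.

Lemma uniq_standard_words n k : uniq (standard_words n k).
Proof.
elim: n k => [|n IH] k; first by case: k.
cbn [standard_words]; rewrite cat_uniq uniq_allpairs_rcons ?iota_uniq //.
case: k => [|k] //; rewrite uniq_allpairs_rcons ?iota_uniq // andbT.
apply/hasPn => _ /allpairsP [[s c] [/mem_standard_words [_ s_k] _ ->]].
rewrite mem_allpairs_rcons negb_and; apply/orP; left.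
by apply/negP => /mem_standard_words [_ /(standard_word_uniq s_k)]; lia.
Qed.

Section GeneratingFunction.
Variables (R : comNzRingType) (q : R).
Local Open Scope ring_scope.

Lemma sum_expr_iota m l : \sum_(c <- iota m l) q ^+ c = q ^+ m * qint q l.
Proof.
rewrite -[m in iota m l]addn0 iotaDl big_map -{1}(subn0 l) -/(index_iota 0 l) big_mkord.
by rewrite /qint mulr_sumr; apply: eq_bigr => c _; rewrite exprD.
Qed.

Lemma sum_allpairs_rcons (S : seq (seq nat)) (C : seq nat) :
  \sum_(s <- [seq rcons s c | s <- S, c <- C]) q ^+ sumn s
  = (\sum_(s <- S) q ^+ sumn s) * \sum_(c <- C) q ^+ c.
Proof.
rewrite big_allpairs_dep mulr_suml; apply: eq_bigr => s _.
by rewrite mulr_sumr; apply: eq_bigr => c _; rewrite sumn_rcons exprD.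
Qed.

Lemma sum_standard_words n k :
  \sum_(s <- standard_words n k) q ^+ sumn s = q ^+ (k ^ 2) * qint q 2 ^+ k * SB q n k.
Proof.
elim: n k => [|n IH] k.
  by case: k => [|k] /=; rewrite ?big_seq1 ?big_nil ?mulr1 ?mulr0.
cbn [standard_words SB]; rewrite addn1; case: k => [|k].
  by rewrite cats0 sum_allpairs_rcons sum_expr_iota IH; ring.
rewrite big_cat !sum_allpairs_rcons !sum_expr_iota !IH /=.
have -> : (k.+1 ^ 2 = k ^ 2 + (2 * k).+1)%N by lia.
by rewrite exprD [qint q 2 ^+ k.+1]exprS expr0; ring.
Qed.

End GeneratingFunction.

Lemma setbarE n (A : {set signed n}) x : (x \in setbar A) = (sbar x \in A).
Proof.
have sbarK : involutive (@sbar n) by case=> a b; rewrite /sbar /= negbK.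
by rewrite /setbar (can2_imset_pre _ sbarK sbarK) inE.
Qed.

Section MinAbs.
Variable n : nat.
Implicit Types A B : {set signed n}.

Lemma minabs_le A x : x \in A -> minabs A <= sabs x.
Proof.
move=> xA; rewrite /minabs -minEnat.
by have := bigmin_le_cond (T := nat) n.+1 (P := mem A) (@sabs n) xA.
Qed.

Lemma minabs_mono A B :
  (forall x, x \in B -> exists2 y, y \in A & sabs y <= sabs x) -> minabs A <= minabs B.
Proof.
move=> AB; rewrite {2}/minabs; elim/big_ind: _ => [| u v | x /AB [y /minabs_le]].
- rewrite /minabs -minEnat.
  by have := bigmin_le_id (T := nat) (index_enum _) n.+1 (mem A) (@sabs n).
- by rewrite leq_min => -> ->.
- exact: leq_trans.
Qed.

Lemma minabs_attained A : A != set0 -> exists2 x, x \in A & minabs A = sabs x.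
Proof.
case/set0Pn => x0 x0A; rewrite /minabs -minEnat.
have sabs_le x : x \in A -> sabs x <= n.+1 by rewrite /sabs ltnS ltnW.
by have [x xA ->] := eq_bigmin (x := n.+1) x0 (mem A) (@sabs n) x0A sabs_le; exists x.
Qed.

End MinAbs.

Lemma sum_mem_bigcup (I U : finType) (A : I -> {set U}) x :
  (forall i j, x \in A i -> x \in A j -> i = j) -> \sum_i (x \in A i) = (x \in \bigcup_i A i).
Proof.
move=> A_inj; case: (pickP (fun i => x \in A i)) => [i0 x_i0 | none].
  have -> : x \in \bigcup_i A i by apply/bigcupP; exists i0.
  rewrite (bigD1 i0) //= x_i0 big1 // => i ne.
  by apply/eqP; rewrite eqb0; apply: contra ne => x_i; rewrite (A_inj _ _ x_i x_i0).
have -> : x \in \bigcup_i A i = false by apply/negbTE/bigcupP => -[i _]; rewrite none.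
by rewrite big1 // => i _; rewrite none.
Qed.

Section SignedPartitionWords.
Variables n k : nat.
Implicit Types (T : {set 'I_n}) (pi : {ffun 'I_k -> {set signed n}}) (s : seq nat).

(* On an SSP at most one summand is nonzero ([letter_ofP]); the sum form turns the sum of
   the letters into a plain exchange of sums ([sumn_word_of]). *)
Definition letter_of pi (a : 'I_n) : nat :=
  \sum_(b : bool) \sum_(i < k) ((a, b) \in pi i) * letter i b.

Definition word_of pi : seq nat := [seq letter_of pi a | a <- enum 'I_n].

Definition partition_of s : {ffun 'I_k -> {set signed n}} :=
  [ffun i : 'I_k => [set x : signed n | nth 0 s x.1 == letter i x.2]].

Lemma size_word_of pi : size (word_of pi) = n.
Proof. by rewrite size_map size_enum_ord. Qed.

Lemma nth_word_of pi (a : 'I_n) : nth 0 (word_of pi) a = letter_of pi a.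
Proof. by rewrite (nth_map a) ?size_enum_ord // nth_ord_enum. Qed.

Lemma blk_SSP_inj T pi j j' x : is_SSP T pi -> x \in blk pi j -> x \in blk pi j' -> j = j'.
Proof.
case/and4P=> _ /forallP disj _ _ x_j x_j'; apply/eqP; apply: contraTT x_j' => ne_jj'.
have /forallP/(_ j')/implyP/(_ ne_jj') dis_jj' := disj j.
by rewrite (disjointFr dis_jj' x_j).
Qed.

Lemma SSP_mem_inj T pi a b b' (i i' : 'I_k) :
  is_SSP T pi -> (a, b) \in pi i -> (a, b') \in pi i' -> i = i' /\ b = b'.
Proof.
move=> piS ab_i; have [<- | ne_bb'] := eqVneq b b' => ab'_i'.
  by have [->] := blk_SSP_inj (j := (i, true)) (j' := (i', true)) piS ab_i ab'_i'.
have ab'_bar_i : (a, b') \in blk pi (i, false).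
  rewrite /blk /= setbarE /sbar /=.
  by move: ab_i ab'_i' ne_bb'; case: b; case: b'.
by have := blk_SSP_inj (j := (i', true)) piS ab'_i' ab'_bar_i.
Qed.

Variant letter_of_spec pi (a : 'I_n) : nat -> Prop :=
  | LetterIn (i : 'I_k) b of (a, b) \in pi i : letter_of_spec pi a (letter i b)
  | LetterOut of (forall (i : 'I_k) b, (a, b) \notin pi i) : letter_of_spec pi a 0.

Lemma letter_ofP T pi a : is_SSP T pi -> letter_of_spec pi a (letter_of pi a).
Proof.
move=> piS; case: (pickP (fun p : bool * 'I_k => (a, p.1) \in pi p.2)) => [[b i] /= ab_i | none].
  suff -> : letter_of pi a = letter i b by constructor.
  rewrite /letter_of pair_big (bigD1 (b, i)) //= ab_i mul1n big1 ?addn0 // => -[b' i'] /= ne.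
  apply/eqP; rewrite muln_eq0 eqb0; apply/orP; left; apply: contra ne => ab'_i'.
  by have [-> ->] := SSP_mem_inj piS ab'_i' ab_i.
have out i b : (a, b) \notin pi i by rewrite (none (b, i)).
rewrite /letter_of big1 => [|b _]; first by constructor.
by rewrite big1 // => i _; rewrite (negbTE (out i b)).
Qed.

Lemma mem_letter_of T pi :
  is_SSP T pi -> forall a (i : 'I_k) b, ((a, b) \in pi i) = (letter_of pi a == letter i b).
Proof.
move=> piS a i b; case: (letter_ofP a piS) => [i0 b0 ab0_i0 | out].
  apply/idP/eqP => [ab_i | /letter_inj [/val_inj <- <-] //].
  by have [-> ->] := SSP_mem_inj piS ab0_i0 ab_i.
by rewrite (negbTE (out i b)) eq_sym eqn0Ngt letter_gt0.
Qed.

Lemma SSP_first_before T pi (i j : 'I_k) x :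
  is_SSP T pi -> x \in pi i -> j < i -> exists2 y, y \in pi j & y.1 < x.1.
Proof.
move=> piS x_i lt_ji; have /and4P [/forallP nonempty _ _ /forallP ordered] := piS.
have [y y_j min_y] := minabs_attained (nonempty j).
exists y => //; rewrite ltn_neqAle.
have -> : y.1 <= x.1.
  have /forallP/(_ i)/implyP/(_ (ltnW lt_ji)) := ordered j.
  by rewrite min_y => /leq_trans/(_ (minabs_le x_i)).
apply/andP; split=> //; apply: contraTneq lt_ji => /val_inj e.
move: y_j x_i; rewrite [y]surjective_pairing [x]surjective_pairing e => y_j x_i.
by have [-> _] := SSP_mem_inj piS y_j x_i; rewrite ltnn.
Qed.

Lemma partition_of_word_of pi : is_PSSP pi -> partition_of (word_of pi) = pi.
Proof.
case/existsP=> T piS; apply/ffunP => i; apply/setP => -[a b].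
by rewrite ffunE inE nth_word_of (mem_letter_of piS).
Qed.

Lemma sumn_word_of pi :
  sumn (word_of pi) = \sum_(x : signed n) \sum_(i < k) (x \in pi i) * letter i x.2.
Proof. by rewrite sumnE big_map big_enum /= pair_big; apply: eq_bigr => -[a b]. Qed.

Lemma pos_SSP T pi :
  is_SSP T pi -> pos pi = \sum_(x : signed n) \sum_(i < k) (x \in pi i) * x.2.
Proof.
move=> piS; rewrite /pos -sum1_card big_mkcond; apply: eq_bigr => x _.
rewrite -big_distrl sum_mem_bigcup /= ?inE; first by case: (x \in _); case: (x.2).
by move=> i j; rewrite [x]surjective_pairing => x_i x_j; have [] := SSP_mem_inj piS x_i x_j.
Qed.

Lemma mstat_word_of pi : is_PSSP pi -> mstat pi = sumn (word_of pi).
Proof.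
case/existsP=> T piS.
have twice_sum : 2 * \sum_(i < k) i.+1 * #|pi i| = sumn (word_of pi) + pos pi.
  rewrite sumn_word_of (pos_SSP piS) -big_split /=.
  rewrite (eq_bigr (fun x => \sum_(i < k) (x \in pi i) * (letter i x.2 + x.2))); last first.
    by move=> x _; rewrite -big_split /=; apply: eq_bigr => i _; rewrite mulnDr.
  rewrite exchange_big big_distrr /=; apply: eq_bigr => i _.
  rewrite -sum1_card big_mkcond !big_distrr /=; apply: eq_bigr => x _.
  by rewrite /letter; case: (x \in _); case: (x.2); lia.
by rewrite /mstat twice_sum addnK.
Qed.

Lemma standard_word_of_PSSP pi : is_PSSP pi -> standard_word k (word_of pi).
Proof.
case/existsP=> T piS; have /and4P [/forallP nonempty _ _ _] := piS.
split.
- apply/allP => _ /mapP [a _ ->]; case: (letter_ofP a piS) => // i b _.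
  exact: letter_leq_double.
- move=> j lt_jk; have /set0Pn [[a b] ab_j] := nonempty (Ordinal lt_jk).
  apply/hasP; exists (letter_of pi a); first exact: map_f (mem_enum _ a).
  by move: ab_j; rewrite (mem_letter_of piS) => /eqP ->; rewrite in_block_letter.
- move=> a j; case: (ltnP a n) => [lt_an | le_na]; last by rewrite nth_default ?size_word_of.
  rewrite -[a]/(nat_of_ord (Ordinal lt_an)) nth_word_of.
  case: (letter_ofP _ piS) => // i b ab_i lt_ji.
  rewrite double_ltn_letter in lt_ji.
  have lt_jk := ltn_trans lt_ji (ltn_ord i).
  have [y y_j lt_ya] := SSP_first_before (j := Ordinal lt_jk) piS ab_i lt_ji.
  apply/has_in_block_takeP; exists y.1 => //; rewrite nth_word_of.
  move: y_j; rewrite [y]surjective_pairing (mem_letter_of piS) => /eqP ->.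
  by rewrite in_block_letter.
Qed.

Lemma mem_partition_of s i x : (x \in partition_of s i) = (nth 0 s x.1 == letter i x.2).
Proof. by rewrite ffunE inE. Qed.

Lemma mem_blk_partition_of s j x :
  (x \in blk (partition_of s) j) = (nth 0 s x.1 == letter j.1 (x.2 == j.2)).
Proof. by case: j => i []; rewrite /blk /= ?setbarE mem_partition_of; case: x => a []. Qed.

Lemma partition_of_in_block s (a : 'I_n) (i : 'I_k) :
  in_block i (nth 0 s a) -> (a, odd (nth 0 s a)) \in partition_of s i.
Proof. by move=> a_i; rewrite mem_partition_of -in_blockE. Qed.

Lemma SSP_partition_of s :
  size s = n -> standard_word k s -> is_SSP [set a : 'I_n | 0 < nth 0 s a] (partition_of s).
Proof.
move=> size_s [small cover ordered]; apply/and4P; split.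
- apply/forallP => i; have [a lt_as a_i] := has_nthP 0 (cover i (ltn_ord i)).
  rewrite size_s in lt_as; apply/set0Pn; exists (Ordinal lt_as, odd (nth 0 s a)).
  exact: partition_of_in_block.
- apply/forallP => j1; apply/forallP => j2; apply/implyP; apply: contraNT => /pred0Pn [x /=].
  rewrite !mem_blk_partition_of => /andP [/eqP -> /eqP /letter_inj [e1 e2]].
  apply/eqP; case: j1 j2 e1 e2 => [i1 b1] [i2 b2] /= /val_inj ->.
  by case: b1; case: b2; case: (x.2).
- apply/eqP/setP => x; rewrite /symm !inE; apply/bigcupP/idP => [[j _] | c_gt0].
    by rewrite mem_blk_partition_of => /eqP ->; apply: letter_gt0.
  have lt_xs : x.1 < size s by rewrite size_s.
  have [i [b e]] := letter_cover c_gt0 (allP small _ (mem_nth 0 lt_xs)).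
  exists (i, x.2 == b) => //; rewrite mem_blk_partition_of e {e} /=.
  by case: (x.2); case: b.
- apply/forallP => i; apply/forallP => j; apply/implyP => le_ij; apply: minabs_mono => x.
  have [-> | ne_ij] := eqVneq i j; first by exists x.
  have lt_ij : i < j by rewrite ltn_neqAle le_ij andbT.
  rewrite mem_partition_of => /eqP x_j.
  have /has_in_block_takeP [b lt_bx b_i] : has (in_block i) (take x.1 s).
    by apply: ordered; rewrite x_j double_ltn_letter.
  exists (Ordinal (ltn_trans lt_bx (ltn_ord x.1)), odd (nth 0 s b)).
    exact: partition_of_in_block.
  by rewrite /sabs /= ltnW.
Qed.

Lemma PSSP_partition_of s : size s = n -> standard_word k s -> is_PSSP (partition_of s).
Proof.
by move=> size_s ws; apply/existsP; exists [set a : 'I_n | 0 < nth 0 s a]; apply: SSP_partition_of.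
Qed.

Lemma word_of_partition_of s :
  size s = n -> standard_word k s -> word_of (partition_of s) = s.
Proof.
move=> size_s ws; have piS := SSP_partition_of size_s ws; have [small _ _] := ws.
apply: (@eq_from_nth _ 0); rewrite size_word_of ?size_s // => a lt_an.
rewrite -[a]/(nat_of_ord (Ordinal lt_an)) nth_word_of.
case: (letter_ofP _ piS) => [i b | out].
  by rewrite mem_partition_of => /eqP.
case: (posnP (nth 0 s a)) => [-> // | c_gt0].
have lt_as : a < size s by rewrite size_s.
have [i [b e]] := letter_cover c_gt0 (allP small _ (mem_nth 0 lt_as)).
by have := out i b; rewrite mem_partition_of /= e eqxx.
Qed.

End SignedPartitionWords.

Lemma perm_standard_words n k :
  perm_eq (standard_words n k)
    [seq word_of pi | pi <- [seq pi <- index_enum {ffun 'I_k -> {set signed n}} | is_PSSP pi]].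
Proof.
apply: uniq_perm; first exact: uniq_standard_words.
  rewrite map_inj_in_uniq ?filter_uniq ?index_enum_uniq // => pi pi'.
  rewrite !mem_filter => /andP [Ppi _] /andP [Ppi' _] e.
  by rewrite -(partition_of_word_of Ppi) e partition_of_word_of.
move=> s; apply/idP/mapP => [/mem_standard_words [size_s ws] | [pi]].
  exists (partition_of n k s); last by rewrite word_of_partition_of.
  by rewrite mem_filter PSSP_partition_of // mem_index_enum.
rewrite mem_filter => /andP [Ppi _] ->; apply/mem_standard_words.
by split; [exact: size_word_of | exact: standard_word_of_PSSP].
Qed.

Local Open Scope ring_scope.

Theorem proposition3p2 (R : comNzRingType) (q : R) (n k : nat) :
  (k <= n)%N ->
  q ^+ (k ^ 2) * qint q 2 ^+ k * SB q n k
  = \sum_(pi : {ffun 'I_k -> {set signed n}} | is_PSSP pi) q ^+ mstat pi.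
Proof.
(* Both sides vanish when k > n. *)
move=> _.
rewrite -sum_standard_words (perm_big _ (perm_standard_words n k)) big_map big_filter.
by apply: eq_bigr => pi /mstat_word_of ->.
Qed.
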